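(* Let $\zeta(r,n)=n^{-1/2}/(52r^2)$. There is no infinite family of megastars that is up-to-$\zeta$ fixating.
   Context: Moran process: given a directed graph $G$ and fitness $r>1$, one vertex (the initial mutant) is a mutant, the rest non-mutants. At each step a vertex $v$ is chosen with probability proportional to fitness (mutants $r$, non-mutants $1$), an out-neighbour $w$ of $v$ is chosen uniformly at random and the state of $v$ is copied to $w$. Extinction: eventually no mutants. An infinite family $\Upsilon$ of directed graphs is up-to-$\zeta$ fixating if for every $r>1$ there is $n_0$ such that for every $G\in\Upsilon$ with $n\ge n_0$ vertices, the extinction probability of the Moran process with fitness $r$ on $G$ from a uniformly random initial mutant is at most $\zeta(r,n)$. The $(k,\ell,m)$-megastar (for positive integers $k,\ell,m$): disjoint union of reservoirs $R_1,\dots,R_\ell$ (size $m$), cliques $K_1,\dots,K_\ell$ (size $k$), feeders $a_1,\dots,a_\ell$, and centre $v^*$; edges from $v^*$ to all reservoir vertices, from each vertex of $R_i$ to $a_i$, from $a_i$ to each vertex of $K_i$, both directions between distinct vertices of each $K_i$, and from every clique vertex to $v^*$. An infinite family of megastars is an infinite set of such graphs. *)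

From HB Require Import structures.
From mathcomp Require Import all_boot all_order all_algebra.
From mathcomp Require Import all_classical all_reals all_analysis.
Set Implicit Arguments. Unset Strict Implicit. Unset Printing Implicit Defensive.
Import Order.TTheory GRing.Theory Num.Theory numFieldNormedType.Exports.
Local Open Scope ring_scope.

Section Moran.
Variables (R : realType) (V : finType) (e : rel V) (r : R).

(* fitness of vertex v in state S (S = set of mutants) *)
Definition moran_fit (S : {set V}) (v : V) : R := if v \in S then r else 1.
Definition moran_totfit (S : {set V}) : R := \sum_v moran_fit S v.
Definition outdeg (v : V) : nat := #|[set w | e v w]|.
(* v reproduces onto its out-neighbour w: the state of v is copied to w *)
Definition moran_step (S : {set V}) (v w : V) : {set V} :=
  if v \in S then w |: S else S :\ w.
Definition moran_trans (S S' : {set V}) : R :=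
  \sum_v \sum_(w | e v w)
     (moran_fit S v / moran_totfit S) * (outdeg v)%:R^-1
     * (moran_step S v w == S')%:R.
Fixpoint moran_ext_by (t : nat) (S : {set V}) : R :=
  match t with
  | 0 => (S == finset.set0)%:R
  | t'.+1 => \sum_(S' : {set V}) moran_trans S S' * moran_ext_by t' S'
  end.
(* extinction probability from S: probability of eventually reaching the
   (absorbing) all-non-mutant state = lim_t P(no mutants at time t) *)
Definition moran_extinction (S : {set V}) : R :=
  limn (fun t => moran_ext_by t S).
Definition moran_extinction_unif : R :=
  #|V|%:R^-1 * \sum_v moran_extinction [set v].
End Moran.

(* None = centre v*;  Some (inl (inl (i,j))) = j-th vertex of reservoir R_i;
   Some (inl (inr i)) = feeder a_i;  Some (inr (i,j)) = j-th vertex of clique K_i *)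
Definition megastar_vertex (k l m : nat) : finType :=
  option ((('I_l * 'I_m) + 'I_l) + ('I_l * 'I_k))%type.

Definition megastar_edge (k l m : nat) : rel (megastar_vertex k l m) :=
  fun x y =>
  match x, y with
  | None, Some (inl (inl _)) => true
  | Some (inl (inl (i, _))), Some (inl (inr i')) => i == i'
  | Some (inl (inr i)), Some (inr (i', _)) => i == i'
  | Some (inr (i, j)), Some (inr (i', j')) => (i == i') && (j != j')
  | Some (inr _), None => true
  | _, _ => false
  end.

Definition megastar_extinction (R : realType) (r : R) (k l m : nat) : R :=
  moran_extinction_unif (@megastar_edge k l m) r.

Definition megastar_family_upto_fixating (R : realType) (zeta : R -> nat -> R)
    (F : set (nat * nat * nat)) : Prop :=
  forall r : R, 1 < r -> exists n0 : nat, forall k l m : nat,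
    F (k, l, m) -> (n0 <= #|megastar_vertex k l m|)%N ->
    megastar_extinction r k l m <= zeta r #|megastar_vertex k l m|.

From HB Require Import structures.
From mathcomp Require Import all_boot all_order all_algebra.
From mathcomp Require Import all_classical all_reals all_analysis.
From mathcomp Require Import ring lra zify.
Set Implicit Arguments.
Unset Strict Implicit.
Unset Printing Implicit Defensive.
Import Order.TTheory GRing.Theory Num.Theory numFieldNormedType.Exports.
Local Open Scope ring_scope.

(* The extinction probability q of the Moran process is harmonic for one step
   of the chain, so its expected one-step change vanishes in every state.  For
   a single mutant u this gives temperature u <= q {u} (r + temperature u
   - r beta) as soon as every move of u to an out-neighbour keeps a fraction
   beta of q {u}; for a pair {x, a} it bounds how much of q {x} survives x
   invading a.  In a megastar a clique vertex has temperature 1, whence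
   q >= 1/(r+1); a reservoir vertex of R_i can only spread to a_i, which the
   m - 1 other vertices of R_i overwrite at rate about m, whence
   q >= 1/(l (2r^2 + r + 1)).  Averaging over the n = 1 + lm + l + lk
   vertices, the extinction probability is at least
   (m/(2r^2 + r + 1) + lk/(r + 1))/n, which exceeds n^(-1/2)/(52 r^2) for
   r >= 1 because n <= 4 (m + lk)^2. *)

Section MoranExtinction.
Variables (R : realType) (V : finType) (e : rel V) (r : R).
Hypothesis r_gt0 : 0 < r.
Hypothesis outdeg_gt0 : forall v, (0 < outdeg e v)%N.
Variable v0 : V.

Local Notation fit := (@moran_fit R V r).
Local Notation totfit := (@moran_totfit R V r).
Local Notation ext := (moran_ext_by e r).
Local Notation q := (moran_extinction e r).

Definition moran_edge_prob (S : {set V}) (v : V) : R :=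
  fit S v / totfit S * (outdeg e v)%:R^-1.

Definition moran_mean (g : {set V} -> R) (S : {set V}) : R :=
  \sum_v \sum_(w | e v w) moran_edge_prob S v * g (moran_step S v w).

Lemma moran_fit_gt0 S v : 0 < fit S v.
Proof. by rewrite /moran_fit; case: ifP. Qed.

Lemma moran_totfit_gt0 S : 0 < totfit S.
Proof.
rewrite /moran_totfit (bigD1 v0) //= ltr_pwDl ?moran_fit_gt0 //.
by apply: sumr_ge0 => v _; apply/ltW/moran_fit_gt0.
Qed.

Lemma moran_edge_prob_ge0 S v : 0 <= moran_edge_prob S v.
Proof.
by rewrite /moran_edge_prob !mulr_ge0 ?invr_ge0 ?ler0n ?ltW ?moran_fit_gt0
  ?moran_totfit_gt0.
Qed.

Lemma outdeg_mean_const v (c : R) :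
  (outdeg e v)%:R^-1 * \sum_(w | e v w) c = c.
Proof.
rewrite (eq_bigl (fun w => w \in [set w | e v w])) => [|w]; last by rewrite inE.
rewrite sumr_const -/(outdeg e v) -[c *+ _]mulr_natl mulrA mulVf ?mul1r //.
by rewrite pnatr_eq0 -lt0n outdeg_gt0.
Qed.

Lemma outdeg_mean_ge v (c : R) (g : V -> R) :
  (forall w, e v w -> c <= g w) ->
  c <= (outdeg e v)%:R^-1 * \sum_(w | e v w) g w.
Proof.
move=> cg; rewrite -{1}(outdeg_mean_const v c) ler_wpM2l ?invr_ge0 ?ler0n //.
exact: ler_sum.
Qed.

Lemma sum_moran_edge_prob S : \sum_v \sum_(w | e v w) moran_edge_prob S v = 1.
Proof.
under eq_bigr do under eq_bigr do rewrite /moran_edge_prob mulrC.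
under eq_bigr do rewrite -big_distrr /= outdeg_mean_const.
by rewrite -mulr_suml mulfV // gt_eqF // moran_totfit_gt0.
Qed.

Lemma moran_trans_sumE (g : {set V} -> R) S :
  \sum_S' moran_trans e r S S' * g S' = moran_mean g S.
Proof.
rewrite /moran_trans; under eq_bigr do rewrite big_distrl /=.
rewrite exchange_big; apply: eq_bigr => v _.
under eq_bigr do rewrite big_distrl /=.
rewrite exchange_big /=; apply: eq_bigr => w _.
rewrite (bigD1 (moran_step S v w)) //= eqxx mulr1 big1 ?addr0 //.
by move=> S' /negbTE; rewrite eq_sym => ->; rewrite mulr0 mul0r.
Qed.

Lemma moran_mean_const (c : R) S : moran_mean (fun=> c) S = c.
Proof.
rewrite /moran_mean -[RHS]mul1r -(sum_moran_edge_prob S) mulr_suml.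
by apply: eq_bigr => v _; rewrite mulr_suml.
Qed.

Lemma moran_mean_le (g h : {set V} -> R) S :
  (forall S', g S' <= h S') -> moran_mean g S <= moran_mean h S.
Proof.
move=> gh; apply: ler_sum => v _; apply: ler_sum => w _.
by rewrite ler_wpM2l ?moran_edge_prob_ge0.
Qed.

Lemma moran_ext_byS t S : ext t.+1 S = moran_mean (ext t) S.
Proof. exact: moran_trans_sumE. Qed.

Lemma moran_ext_by_set0 t : ext t finset.set0 = 1.
Proof.
elim: t => [|t IH]; first by rewrite /= eqxx.
rewrite moran_ext_byS -[RHS](moran_mean_const 1 finset.set0).
apply: eq_bigr => v _; apply: eq_bigr => w _.
by rewrite /moran_step inE finset.set0D IH.
Qed.

Lemma moran_ext_by_ge0 t S : 0 <= ext t S.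
Proof.
elim: t S => [|t IH] S; first by rewrite /= ler0n.
by rewrite moran_ext_byS -(moran_mean_const 0 S); apply: moran_mean_le.
Qed.

Lemma moran_ext_by_le1 t S : ext t S <= 1.
Proof.
elim: t S => [|t IH] S; first by rewrite /= lern1 leq_b1.
by rewrite moran_ext_byS -(moran_mean_const 1 S); apply: moran_mean_le.
Qed.

Lemma moran_ext_by_nondecreasing S : nondecreasing_seq (ext ^~ S).
Proof.
apply/nondecreasing_seqP => t; elim: t S => [|t IH] S.
  rewrite [ext 0 S]/=; case: eqP => [->|_]; first by rewrite moran_ext_by_set0.
  exact: moran_ext_by_ge0.
by rewrite (moran_ext_byS t.+1) moran_ext_byS; apply: moran_mean_le.
Qed.

Lemma moran_ext_by_cvg S : cvgn (ext ^~ S).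
Proof.
apply: nondecreasing_is_cvgn; first exact: moran_ext_by_nondecreasing.
by exists 1 => _ [t _ <-]; apply: moran_ext_by_le1.
Qed.

Lemma moran_ext_by_le_extinction t S : ext t S <= q S.
Proof.
exact: nondecreasing_cvgn_le (moran_ext_by_nondecreasing S)
  (moran_ext_by_cvg (S := S)) t.
Qed.

Lemma moran_extinction_ge0 S : 0 <= q S.
Proof.
exact: le_trans (moran_ext_by_ge0 0 S) (moran_ext_by_le_extinction 0 S).
Qed.

Lemma moran_extinction_le1 S : q S <= 1.
Proof.
apply: limr_le; first exact: moran_ext_by_cvg.
by apply: nearW => t; apply: moran_ext_by_le1.
Qed.

Lemma moran_extinction_set0 : q finset.set0 = 1.
Proof.
apply/le_anti; rewrite moran_extinction_le1 -(moran_ext_by_set0 0).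
exact: moran_ext_by_le_extinction.
Qed.

Lemma moran_extinction_harmonic S : q S = moran_mean q S.
Proof.
have ext_shift : ((fun t => ext t.+1 S) @ \oo --> q S)%classic.
  by move: (moran_ext_by_cvg (S := S)); rewrite -cvg_shiftS.
have ext_mean : ((fun t => ext t.+1 S) @ \oo --> moran_mean q S)%classic.
  under eq_cvg do rewrite moran_ext_byS.
  apply: cvg_big => //; first exact: add_continuous.
  move=> v _; apply: cvg_big => //; first exact: add_continuous.
  by move=> w _; apply: cvgMl_tmp; apply: moran_ext_by_cvg.
exact: cvg_unique ext_shift ext_mean.
Qed.

(* The one-step drift of q from S vanishes; the common factor 1 / totfit S
   has been cancelled. *)
Lemma moran_extinction_balance (S : {set V}) :
  r * \sum_(v in S) (outdeg e v)%:R^-1 * \sum_(w | e v w) (q (w |: S) - q S)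
  + \sum_(v | v \notin S) (outdeg e v)%:R^-1 *
      \sum_(a in S | e v a) (q (S :\ a) - q S) = 0.
Proof.
have drift : \sum_v \sum_(w | e v w)
    moran_edge_prob S v * (q (moran_step S v w) - q S) = 0.
  transitivity (moran_mean q S - moran_mean (fun=> q S) S); last first.
    by rewrite moran_mean_const -moran_extinction_harmonic subrr.
  rewrite -sumrB; apply: eq_bigr => v _; rewrite -sumrB.
  by apply: eq_bigr => w _; rewrite mulrBr.
move/eqP: drift; rewrite (bigID (mem S)) /=.
set mutants := (X in X + _ == 0); set residents := (X in _ + X == 0).
have -> : mutants = (totfit S)^-1 * (r * \sum_(v in S) (outdeg e v)%:R^-1 *
    \sum_(w | e v w) (q (w |: S) - q S)).
  rewrite /mutants mulrA [_ * r]mulrC mulr_sumr; apply: eq_bigr => v vS.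
  rewrite mulr_sumr mulr_sumr; apply: eq_bigr => w _.
  by rewrite /moran_edge_prob /moran_fit /moran_step vS; ring.
have -> : residents = (totfit S)^-1 * \sum_(v | v \notin S) (outdeg e v)%:R^-1 *
    \sum_(a in S | e v a) (q (S :\ a) - q S).
  rewrite /residents mulr_sumr; apply: eq_bigr => v vS.
  rewrite (bigID (mem S)) /= [X in _ + X]big1 ?addr0; last first.
    move=> w /andP[_ wS]; rewrite /moran_step (negbTE vS).
    have -> : S :\ w = S.
      by apply/finset.setDidPl; rewrite disjoint_sym disjoints1.
    by rewrite subrr mulr0.
  rewrite (eq_bigl (fun a => (a \in S) && e v a)) => [|a]; last exact: andbC.
  rewrite !mulr_sumr; apply: eq_bigr => a _.
  by rewrite /moran_edge_prob /moran_fit /moran_step (negbTE vS); ring.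
by rewrite -mulrDr mulf_eq0 invr_eq0 gt_eqF ?moran_totfit_gt0 // => /eqP.
Qed.

Definition temperature (u : V) : R := \sum_v (e v u)%:R / (outdeg e v)%:R.

Lemma temperature_ge0 u : 0 <= temperature u.
Proof. by apply: sumr_ge0 => v _; rewrite mulr_ge0 ?invr_ge0 ?ler0n. Qed.

Lemma temperature_const_outdeg u d : (forall v, e v u -> outdeg e v = d) ->
  temperature u = (\sum_v (e v u : nat))%:R / d%:R.
Proof.
move=> in_outdeg; rewrite natr_sum mulr_suml; apply: eq_bigr => v _.
by case: (boolP (e v u)) => [/in_outdeg ->|_]; rewrite ?mul0r.
Qed.

Lemma temperature_le_extinction1 u beta : ~~ e u u ->
  (forall w, e u w -> beta * q [set u] <= q (w |: [set u])) ->
  temperature u <= q [set u] * (r + temperature u - r * beta).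
Proof.
move=> no_loop q_neighbour; set Q := q [set u].
have mutant : (beta - 1) * Q <=
    (outdeg e u)%:R^-1 * \sum_(w | e u w) (q (w |: [set u]) - Q).
  by apply: outdeg_mean_ge => w /q_neighbour; rewrite mulrBl mul1r lerD2r.
have resident : \sum_(v | v \notin [set u]) (outdeg e v)%:R^-1 *
      \sum_(a in [set u] | e v a) (q ([set u] :\ a) - Q)
    = (1 - Q) * temperature u.
  rewrite /temperature [in RHS](bigD1 u) //= (negbTE no_loop) mul0r add0r.
  rewrite mulr_sumr.
  apply: eq_big => [v|v _]; first by rewrite inE.
  rewrite big_mkcondr big_set1 finset.setDv moran_extinction_set0.
  by case: (e v u); rewrite /= ?mul1r ?mul0r ?mulr0 // mulrC.
have := moran_extinction_balance [set u]; rewrite big_set1 resident.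
have := ler_wpM2l (ltW r_gt0) mutant; lra.
Qed.

Lemma extinction_pair_bound x a : x != a ->
  (\sum_(v | v \notin [set x; a]) (e v a)%:R / (outdeg e v)%:R) * q [set x]
  <= q [set x; a] * (2 * r + temperature x +
       \sum_(v | v \notin [set x; a]) (e v a)%:R / (outdeg e v)%:R).
Proof.
move=> xa; set S := [set x; a]; set Q := q S.
set J := \sum_(v | v \notin S) _.
pose Ix : R := \sum_(v | v \notin S) (e v x)%:R / (outdeg e v)%:R.
have Q_ge0 : 0 <= Q := moran_extinction_ge0 S.
have mutants : - (2 * Q) <= \sum_(v in S) (outdeg e v)%:R^-1 *
    \sum_(w | e v w) (q (w |: S) - Q).
  have : \sum_(v in S) - Q <= \sum_(v in S) (outdeg e v)%:R^-1 *
      \sum_(w | e v w) (q (w |: S) - Q).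
    apply: ler_sum => v _; apply: outdeg_mean_ge => w _.
    by have := moran_extinction_ge0 (w |: S); lra.
  by rewrite sumr_const cards2 xa mulr2n; lra.
have residents : J * (q [set x] - Q) - Ix * Q <= \sum_(v | v \notin S)
    (outdeg e v)%:R^-1 * \sum_(b in S | e v b) (q (S :\ b) - Q).
  rewrite /J /Ix !mulr_suml -sumrB; apply: ler_sum => v _.
  have S_x : S :\ x = [set a].
    apply/setP => y; rewrite !inE.
    by case: eqVneq => // ->; rewrite (negbTE xa).
  have S_a : S :\ a = [set x].
    apply/setP => y; rewrite !inE.
    by case: (eqVneq y a) => [->|_]; rewrite ?orbF // eq_sym (negbTE xa).
  rewrite big_mkcondr big_setU1 ?inE //= big_set1 S_x S_a -/Q.
  have := moran_extinction_ge0 [set a]; set d := (outdeg e v)%:R^-1.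
  have : 0 <= d by rewrite invr_ge0 ler0n.
  by case: (e v x); case: (e v a); rewrite /= ?mul1r ?mul0r ?add0r ?addr0; nra.
have Ix_le : Ix <= temperature x.
  rewrite /temperature (bigID (mem S)) /= lerDr.
  by apply: sumr_ge0 => v _; rewrite mulr_ge0 ?invr_ge0 ?ler0n.
have := moran_extinction_balance S; rewrite -/Q.
have := ler_wpM2l (ltW r_gt0) mutants; have := ler_wpM2r Q_ge0 Ix_le; lra.
Qed.

End MoranExtinction.

(* The factor [r + temperature u - r * beta] of temperature_le_extinction1 at
   a reservoir vertex u: I = 1/(lm) is its temperature, M = m, and beta comes
   from extinction_pair_bound. *)
Lemma reservoir_rate_le (R : realFieldType) (r I M : R) :
  1 <= r -> 1 <= M -> 0 < I -> I * M <= 1 ->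
  r + I - r * ((M - 1) / (2 * r + I + (M - 1))) <= (2 * r ^+ 2 + r + 1) / M.
Proof.
move=> r_ge1 M_ge1 I_gt0 IM_le1.
set D := 2 * r + I + (M - 1).
have D_ge : M <= D by rewrite /D; lra.
have M_gt0 : 0 < M by lra.
have -> : r + I - r * ((M - 1) / D) = I + r * (2 * r + I) / D.
  by rewrite /D; field; lra.
have I_le : I <= M^-1 by rewrite -[M^-1]mul1r ler_pdivlMr.
have : r * (2 * r + I) / D <= r * (2 * r + 1) / M.
  rewrite ler_pdivrMr; last lra.
  rewrite mulrAC ler_pdivlMr //.
  by apply: ler_pM; nra.
have -> : (2 * r ^+ 2 + r + 1) / M = M^-1 + r * (2 * r + 1) / M.
  by field; lra.
lra.
Qed.

Lemma big_option (T : Type) (idx : T) (op : Monoid.law idx) (I : finType)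
    (F : option I -> T) :
  \big[op/idx]_v F v = op (F None) (\big[op/idx]_i F (Some i)).
Proof.
by rewrite ![index_enum _]unlock [@Finite.enum in LHS]unlock /= /option_enum
  big_cons big_map.
Qed.

Lemma outdegE (V : finType) (e : rel V) v :
  outdeg e v = (\sum_w (e v w : nat))%N.
Proof.
rewrite /outdeg -sum1dep_card big_mkcond.
by apply: eq_bigr => w _; case: (e v w).
Qed.

Lemma sum_nat_eq1 n (i : 'I_n) : (\sum_(j < n) (j == i : nat))%N = 1%N.
Proof. by rewrite (bigD1 i) //= eqxx big1 // => j /negbTE ->. Qed.

Lemma sum_nat_neq n (i : 'I_n) : (\sum_(j < n) (j != i : nat))%N = n.-1.
Proof.
rewrite (bigD1 i) //= eqxx add0n (eq_bigr (fun _ => 1%N)) => [|j /negbTE ->//].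
by rewrite sum1_card cardC1 card_ord.
Qed.

Section Megastar.
Variables (k l m : nat).
Hypotheses (k_gt0 : (0 < k)%N) (l_gt0 : (0 < l)%N) (m_gt0 : (0 < m)%N).
Local Notation V := (megastar_vertex k l m).
Local Notation e := (@megastar_edge k l m).

Definition reservoir i j : V := Some (inl (inl (i, j))).
Definition feeder i : V := Some (inl (inr i)).
Definition clique i j : V := Some (inr (i, j)).

Lemma big_megastar_vertex (T : Type) (idx : T) (op : Monoid.com_law idx)
    (F : V -> T) :
  \big[op/idx]_v F v =
  op (F None)
     (op (op (\big[op/idx]_(i < l) \big[op/idx]_(j < m) F (reservoir i j))
             (\big[op/idx]_(i < l) F (feeder i)))
         (\big[op/idx]_(i < l) \big[op/idx]_(j < k) F (clique i j))).
Proof.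
rewrite big_option big_sumType big_sumType !pair_bigA.
by congr (op _ (op (op _ _) _)); apply: eq_bigr => -[].
Qed.

Lemma sum_nat_block n (i : 'I_l) :
  (\sum_(i0 < l) \sum_(j0 < n) (i0 == i : nat))%N = n.
Proof.
under eq_bigr do rewrite big_const_ord iter_addn_0.
by rewrite -big_distrl /= sum_nat_eq1 mul1n.
Qed.

Lemma sum_nat_clique n (i : 'I_l) (j : 'I_n) :
  (\sum_(i0 < l) \sum_(j0 < n) ((i0 == i) && (j0 != j) : nat))%N = n.-1.
Proof.
rewrite (bigD1 i) //= eqxx sum_nat_neq big1 ?addn0 // => i0 /negbTE i0i.
by rewrite big1 // => j0 _; rewrite i0i.
Qed.

Lemma outdeg_center : outdeg e None = (l * m)%N.
Proof.
by rewrite outdegE big_megastar_vertex /= !big_const_ord !iter_addn_0; ring.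
Qed.

Lemma outdeg_reservoir i j : outdeg e (reservoir i j) = 1%N.
Proof.
rewrite outdegE big_megastar_vertex /= !big_const_ord !iter_addn_0.
by under eq_bigr do rewrite eq_sym; rewrite sum_nat_eq1; ring.
Qed.

Lemma outdeg_feeder i : outdeg e (feeder i) = k.
Proof.
rewrite outdegE big_megastar_vertex /= !big_const_ord !iter_addn_0.
under [X in (_ + X)%N]eq_bigr do under eq_bigr do rewrite eq_sym.
by rewrite sum_nat_block; ring.
Qed.

Lemma outdeg_clique i j : outdeg e (clique i j) = k.
Proof.
rewrite outdegE big_megastar_vertex /= !big_const_ord !iter_addn_0.
under eq_bigr do under eq_bigr do rewrite eq_sym [j == _]eq_sym.
by rewrite sum_nat_clique !mul0n !add0n add1n prednK.
Qed.

Lemma megastar_outdeg_gt0 v : (0 < outdeg e v)%N.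
Proof.
case: v => [[[[i j]|i]|[i j]]|].
- by rewrite (outdeg_reservoir i j).
- by rewrite (outdeg_feeder i).
- by rewrite (outdeg_clique i j).
- by rewrite outdeg_center muln_gt0 l_gt0.
Qed.

Lemma megastar_no_loop v : ~~ e v v.
Proof. by case: v => [[[[i j]|i]|[i j]]|] //=; rewrite !eqxx. Qed.

Lemma indeg_reservoir i j : (\sum_v (e v (reservoir i j) : nat))%N = 1%N.
Proof. by rewrite big_megastar_vertex /= !big_const_ord !iter_addn_0; ring. Qed.

Lemma indeg_feeder i : (\sum_v (e v (feeder i) : nat))%N = m.
Proof.
rewrite big_megastar_vertex /= !big_const_ord !iter_addn_0.
by rewrite sum_nat_block; ring.
Qed.

Lemma indeg_clique i j : (\sum_v (e v (clique i j) : nat))%N = k.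
Proof.
rewrite big_megastar_vertex /= !big_const_ord !iter_addn_0.
by rewrite sum_nat_eq1 sum_nat_clique !mul0n !add0n add1n prednK.
Qed.

Variable R : realType.

Lemma temperature_reservoir i j :
  temperature R e (reservoir i j) = ((l * m)%:R)^-1.
Proof.
rewrite (@temperature_const_outdeg _ _ _ _ (l * m)) ?indeg_reservoir ?mul1r //.
by case=> [[[[? ?]|?]|[? ?]]|] //= _; rewrite outdeg_center.
Qed.

Lemma temperature_clique i j : temperature R e (clique i j) = 1.
Proof.
rewrite (@temperature_const_outdeg _ _ _ _ k) ?indeg_clique.
  by rewrite mulfV // pnatr_eq0 -lt0n.
case=> [[[[? ?]|?]|[? ?]]|] //= _; first exact: outdeg_feeder.
exact: outdeg_clique.
Qed.

Lemma feeder_inflow i j :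
  \sum_(v | v \notin [set reservoir i j; feeder i])
    (e v (feeder i))%:R / (outdeg e v)%:R = (m.-1)%:R :> R.
Proof.
set S := [set reservoir i j; feeder i].
transitivity (\sum_(v | v \notin S) (e v (feeder i) : nat)%:R : R).
  apply: eq_bigr => v _.
  case: (boolP (e v (feeder i))) => [|_]; last by rewrite /= mul0r.
  by case: v => [[[[? ?]|?]|[? ?]]|] //= _; rewrite outdeg_reservoir; lra.
have := congr1 (fun n => n%:R : R) (indeg_feeder i).
rewrite /= natr_sum (bigID (mem S)) /= big_setU1 ?inE //= big_set1 /= eqxx /=.
rewrite mulr1n addr0.
by rewrite -subn1 natrB //; lra.
Qed.

Variable r : R.
Hypothesis r_ge1 : 1 <= r.
Local Notation q := (moran_extinction e r).

Let r_gt0 : 0 < r. Proof. exact: lt_le_trans ltr01 r_ge1. Qed.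
Let q_ge0 S : 0 <= q S := moran_extinction_ge0 r_gt0 megastar_outdeg_gt0 None S.

Lemma extinction_clique i j : (r + 1)^-1 <= q [set clique i j].
Proof.
have := temperature_le_extinction1 r_gt0 megastar_outdeg_gt0 None
  (beta := 0) (megastar_no_loop (clique i j)).
rewrite temperature_clique mulr0 subr0 => bound.
rewrite -[X in X <= _]mul1r ler_pdivrMr ?addr_gt0 ?ltr01 //.
by apply: bound => w _; rewrite mul0r q_ge0.
Qed.

Lemma extinction_reservoir i j :
  (l%:R * (2 * r ^+ 2 + r + 1))^-1 <= q [set reservoir i j].
Proof.
set x := reservoir i j; set a := feeder i.
set I : R := ((l * m)%:R)^-1; set M : R := m%:R.
have I_gt0 : 0 < I by rewrite invr_gt0 ltr0n muln_gt0 l_gt0.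
have IM : I * M = (l%:R)^-1.
  by rewrite /I /M natrM invfM -mulrA mulVf ?mulr1 // pnatr_eq0 -lt0n.
have M_ge1 : 1 <= M by rewrite ler1n.
have J_eq : (m.-1)%:R = M - 1 :> R by rewrite -subn1 natrB.
have pair := extinction_pair_bound r_gt0 megastar_outdeg_gt0 None
  (x := x) (a := a) isT.
rewrite feeder_inflow temperature_reservoir -/I J_eq in pair.
set D := 2 * r + I + (M - 1) in pair.
have D_gt0 : 0 < D by rewrite /D; move: r_gt0 M_ge1; lra.
have single : I <= q [set x] * (r + I - r * ((M - 1) / D)).
  have := temperature_le_extinction1 r_gt0 megastar_outdeg_gt0 None
    (beta := (M - 1) / D) (megastar_no_loop x).
  rewrite temperature_reservoir -/I; apply => -[[[[? ?]|?]|[? ?]]|] //= /eqP <-.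
  by rewrite finset.setUC mulrAC ler_pdivrMr.
have IM_le1 : I * M <= 1 by rewrite IM invf_le1 ?ler1n ?ltr0n.
have M_gt0 : 0 < M by rewrite ltr0n.
have c_gt0 : 0 < 2 * r ^+ 2 + r + 1 by move: r_gt0; nra.
rewrite invfM -IM ler_pdivrMr // -ler_pdivlMr //.
apply: le_trans single _; rewrite -mulrA ler_wpM2l //.
exact: reservoir_rate_le.
Qed.

Lemma extinction_singletons_ge :
  m%:R / (2 * r ^+ 2 + r + 1) + (l * k)%:R / (r + 1) <= \sum_v q [set v].
Proof.
set c := 2 * r ^+ 2 + r + 1.
have c_gt0 : 0 < c by rewrite /c; move: r_gt0; nra.
have reservoirs : m%:R / c <= \sum_(i < l) \sum_(j < m) q [set reservoir i j].
  have -> : m%:R / c = \sum_(i < l) \sum_(j < m) (l%:R * c)^-1.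
    rewrite !big_const_ord !iter_addr_0 -mulrnA -[_ *+ (m * l)]mulr_natr natrM.
    by field; rewrite gt_eqF // pnatr_eq0 -lt0n.
  by apply: ler_sum => i _; apply: ler_sum => j _; apply: extinction_reservoir.
have cliques :
    (l * k)%:R / (r + 1) <= \sum_(i < l) \sum_(j < k) q [set clique i j].
  have -> : (l * k)%:R / (r + 1) = \sum_(i < l) \sum_(j < k) (r + 1)^-1.
    rewrite !big_const_ord !iter_addr_0 -mulrnA -[_ *+ (k * l)]mulr_natr.
    by rewrite mulrC mulnC.
  by apply: ler_sum => i _; apply: ler_sum => j _; apply: extinction_clique.
have feeders : 0 <= \sum_(i < l) q [set feeder i] by apply: sumr_ge0 => i _.
rewrite big_megastar_vertex /=.
by move: (q_ge0 [set None]) reservoirs cliques feeders; lra.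
Qed.

Lemma card_megastar_vertex : #|V| = (l * m + l + l * k).+1.
Proof. by rewrite card_option !card_sum !card_prod !card_ord. Qed.

Lemma megastar_extinction_gt :
  (Num.sqrt #|V|%:R)^-1 / (52 * r ^+ 2) < megastar_extinction r k l m.
Proof.
rewrite /megastar_extinction /moran_extinction_unif card_megastar_vertex.
set n := (l * m + l + l * k).+1; set Y := \sum_v _.
set s := Num.sqrt n%:R; set M : R := m%:R; set LK : R := (l * k)%:R.
have s_gt0 : 0 < s by rewrite sqrtr_gt0 ltr0n.
have s_le : s <= 2 * (M + LK).
  rewrite -[2 * _]ger0_norm ?mulr_ge0 ?addr_ge0 ?ler0n //.
  rewrite -sqrtr_sqr ler_wsqrtr //.
  rewrite /M /LK -natrD -[2]/(2%:R : R) -natrM -natrX ler_nat /n.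
  by nia.
have Y_ge := extinction_singletons_ge; rewrite -/Y -/M -/LK in Y_ge.
have M_ge1 : 1 <= M by rewrite ler1n.
have LK_ge0 : 0 <= LK := ler0n _ _.
have Y52 : s < 52 * r ^+ 2 * Y.
  set a := M / _ in Y_ge; set b := LK / _ in Y_ge.
  have a_ge0 : 0 <= a by rewrite divr_ge0 //; move: r_gt0; nra.
  have b_ge0 : 0 <= b by rewrite divr_ge0 //; move: r_gt0; lra.
  have aE : a * (2 * r ^+ 2 + r + 1) = M.
    by rewrite /a mulfVK //; move: r_gt0; nra.
  have bE : b * (r + 1) = LK by rewrite /b mulfVK //; move: r_gt0; lra.
  have hA : 13 * M <= 52 * r ^+ 2 * a.
    have c_le : 13 * (2 * r ^+ 2 + r + 1) <= 52 * r ^+ 2 by move: r_ge1; nra.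
    by move: c_le; nra.
  have hB : 26 * LK <= 52 * r ^+ 2 * b.
    have r1_le : 26 * (r + 1) <= 52 * r ^+ 2 by move: r_ge1; nra.
    by move: r1_le; nra.
  have := ler_wpM2l (mulr_ge0 (ler0n R 52) (exprn_ge0 2 (ltW r_gt0))) Y_ge.
  by move: s_le; lra.
rewrite -[n%:R](sqr_sqrtr (ler0n _ n)) -/s.
have -> : (s ^+ 2)^-1 * Y = s^-1 * (Y / s) by field; rewrite gt_eqF.
rewrite ltr_pM2l ?invr_gt0 // ltr_pdivlMr // ltr_pdivrMl //.
by rewrite mulr_gt0 // exprn_gt0.
Qed.

End Megastar.

Lemma megastar_family_unbounded (F : set (nat * nat * nat)) n0 :
  (forall k l m, F (k, l, m) -> (0 < l)%N) -> infinite_set F ->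
  exists k l m, F (k, l, m) /\ (n0 <= #|megastar_vertex k l m|)%N.
Proof.
move=> F_l_gt0 F_infinite; apply: contrapT => small; apply: F_infinite.
pose f (t : 'I_n0 * 'I_n0 * 'I_n0) := (val t.1.1, val t.1.2, val t.2).
apply: sub_finite_set (finite_image f (@finite_finset _ setT)).
move=> [[k l] m] Fklm; have l_gt0 := F_l_gt0 _ _ _ Fklm.
have : (#|megastar_vertex k l m| < n0)%N.
  by rewrite ltnNge; apply/negP => big; apply: small; exists k, l, m.
rewrite card_megastar_vertex => card_lt.
have k_lt : (k < n0)%N by nia.
have l_lt : (l < n0)%N by nia.
have m_lt : (m < n0)%N by nia.
by exists (Ordinal k_lt, Ordinal l_lt, Ordinal m_lt).
Qed.

Theorem theorem1p11 (R : realType) (F : set (nat * nat * nat)) :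
  (forall k l m : nat, F (k, l, m) -> [/\ (0 < k)%N, (0 < l)%N & (0 < m)%N]) ->
  infinite_set F ->
  ~ megastar_family_upto_fixating
      (fun (r : R) (n : nat) => (Num.sqrt (n%:R))^-1 / (52 * r ^+ 2)) F.
Proof.
move=> F_gt0 F_infinite fixating.
have [n0 small_extinction] := fixating 2 (ltr_nat R 1 2).
have [k [l [m [Fklm big]]]] : exists k l m, F (k, l, m) /\
    (n0 <= #|megastar_vertex k l m|)%N.
  by apply: megastar_family_unbounded F_infinite => k l m /F_gt0 [].
have [k_gt0 l_gt0 m_gt0] := F_gt0 k l m Fklm.
have := small_extinction k l m Fklm big.
by rewrite leNgt megastar_extinction_gt // ler1n.
Qed.
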